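(* In the planar algebra $\mathcal P$ described in the context: (i) $P_4S=SP_4=-2P_4$; (ii) $Q_4S=SQ_4=3Q_4$; (iii) $P_5(S\otimes X)=(S\otimes X)P_5=-2P_5$; (iv) $P_6(S\otimes X^{\otimes2})=(S\otimes X^{\otimes2})P_6=-2P_6$.
   Context: $\mathcal P$ is the unshaded planar algebra generated by a self-adjoint $S\in\mathcal P_4$ modulo: (i) a closed loop equals $2$; (ii) $S$ is uncuppable, uncappable and unsidecappable; (iii) $S^2=6f^{(4)}+S$; (iv) jellyfish relation: the rainbowed $S$ with an extra strand above it equals the same with the strand passing below the box, crossing over its 8 strands; crossings defined by crossing $=i\cdot(\text{A-smoothing})-i\cdot(\text{B-smoothing})$. Multiplication is vertical stacking, $\otimes$ horizontal juxtaposition, $X$ a single strand, $e_k$ the Temperley–Lieb diagram with a cap and cup at positions $k,k+1$. Jones–Wenzl: $f^{(1)}=X$, $f^{(k+1)}=f^{(k)}\otimes X-\frac{k}{k+1}(f^{(k)}\otimes X)e_k(f^{(k)}\otimes X)$. $P_4=\frac35f^{(4)}-\frac15S$, $Q_4=\frac25f^{(4)}+\frac15S$, $P_5=P_4\otimes X-\frac43(P_4\otimes X)e_4(P_4\otimes X)$, $P_6=P_5\otimes X-\frac32(P_5\otimes X)e_5(P_5\otimes X)$. *)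

From HB Require Import structures.
From mathcomp Require Import all_boot all_order all_algebra zify.
Set Implicit Arguments. Unset Strict Implicit. Unset Printing Implicit Defensive.
Import Order.TTheory GRing.Theory Num.Theory.
Local Open Scope ring_scope.

(* An unshaded planar algebra over C, presented (equivalently) as a strict    *)
(* C-linear pivotal *-category whose objects are the natural numbers n        *)
(* (= n strands), tensor product on objects being addition, generated by a    *)
(* symmetrically self-dual strand X = 1 with cup : 0 -> 2 and cap : 2 -> 0.    *)
(*   PHom m n  = diagrams with m boundary points at the bottom and n at the    *)
(*              top; P_n (as an algebra) is PHom n n.                          *)
(*   pa_comp f g = f stacked on top of g ("multiplication is vertical stacking") *)
(*   pa_tens f g = horizontal juxtaposition, f to the left of g.                 *)
(*   pa_star     = the antilinear adjoint (reflection in a horizontal line).     *)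

Definition castH (H : nat -> nat -> Type) (m n m' n' : nat)
  (e1 : m = m') (e2 : n = n') (f : H m n) : H m' n' :=
  match e1, e2 with erefl, erefl => f end.
Arguments castH H {m n m' n'}.

Record PA (C : numClosedFieldType) := {
  PHom : nat -> nat -> lmodType C;
  pa_comp : forall m n p, PHom n p -> PHom m n -> PHom m p;
  pa_id : forall n, PHom n n;
  pa_tens : forall a b c d, PHom a b -> PHom c d -> PHom (a + c) (b + d);
  cup : PHom 0 2;
  cap : PHom 2 0;
  pa_star : forall m n, PHom m n -> PHom n m;
  compDl : forall m n p (a : C) (f g : PHom n p) (h : PHom m n),
      pa_comp (a *: f + g) h = a *: pa_comp f h + pa_comp g h;
  compDr : forall m n p (a : C) (f : PHom n p) (g h : PHom m n),
      pa_comp f (a *: g + h) = a *: pa_comp f g + pa_comp f h;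
  tensDl : forall a b c d (k : C) (f g : PHom a b) (h : PHom c d),
      pa_tens (k *: f + g) h = k *: pa_tens f h + pa_tens g h;
  tensDr : forall a b c d (k : C) (f : PHom a b) (g h : PHom c d),
      pa_tens f (k *: g + h) = k *: pa_tens f g + pa_tens f h;
  compA : forall m n p q (f : PHom p q) (g : PHom n p) (h : PHom m n),
      pa_comp f (pa_comp g h) = pa_comp (pa_comp f g) h;
  comp1f : forall m n (f : PHom m n), pa_comp (pa_id n) f = f;
  compf1 : forall m n (f : PHom m n), pa_comp f (pa_id m) = f;
  tens_id : forall a b, pa_tens (pa_id a) (pa_id b) = pa_id (a + b);
  tens_interchange : forall a b c d e g (f : PHom b c) (f' : PHom a b)
      (h : PHom e g) (h' : PHom d e),
      pa_comp (pa_tens f h) (pa_tens f' h') = pa_tens (pa_comp f f') (pa_comp h h');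
  tensA : forall a b c d e g (f : PHom a b) (h : PHom c d) (k : PHom e g),
      pa_tens f (pa_tens h k)
      = castH (fun x y => PHom x y) (esym (addnA a c e)) (esym (addnA b d g)) (pa_tens (pa_tens f h) k);
  tens0f : forall a b (f : PHom a b), pa_tens (pa_id 0) f = f;
  tensf0 : forall a b (f : PHom a b),
      pa_tens f (pa_id 0) = castH (fun x y => PHom x y) (esym (addn0 a)) (esym (addn0 b)) f;
  zigzag_l : pa_comp (pa_tens cap (pa_id 1)) (pa_tens (pa_id 1) cup) = pa_id 1;
  zigzag_r : pa_comp (pa_tens (pa_id 1) cap) (pa_tens cup (pa_id 1)) = pa_id 1;
  loop2 : pa_comp cap cup = 2%:R *: pa_id 0;
  starD : forall m n (a : C) (f g : PHom m n),
      pa_star (a *: f + g) = (a^*) *: pa_star f + pa_star g;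
  starK : forall m n (f : PHom m n), pa_star (pa_star f) = f;
  star_comp : forall m n p (f : PHom n p) (g : PHom m n),
      pa_star (pa_comp f g) = pa_comp (pa_star g) (pa_star f);
  star_tens : forall a b c d (f : PHom a b) (g : PHom c d),
      pa_star (pa_tens f g) = pa_tens (pa_star f) (pa_star g);
  star_id : forall n, pa_star (pa_id n) = pa_id n;
  star_cup : pa_star cup = cap
}.

Arguments pa_comp {C} _ {m n p}.
Arguments pa_id {C} _ n.
Arguments pa_tens {C} _ {a b c d}.
Arguments cup {C} _.
Arguments cap {C} _.
Arguments pa_star {C} _ {m n}.

Section Diagrams.
Variables (C : numClosedFieldType) (P : PA C).
Local Notation H := (PHom P).
Local Notation "f \o g" := (pa_comp P f g).
Local Notation "f \x g" := (pa_tens P f g) (at level 40, left associativity).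
Local Notation I := (pa_id P).

Lemma coev_eq m : (1 + (m + m)) + 1 = m.+1 + m.+1.
Proof. lia. Qed.

(* nested cups  0 -> m+m  (point i joined to point 2m+1-i) *)
Fixpoint coev (m : nat) : H 0 (m + m) :=
  match m with
  | 0 => I 0
  | m'.+1 => castH (fun x y => H x y) erefl (coev_eq m') ((I 1 \x coev m' \x I 1) \o cup P)
  end.

Fixpoint ev (m : nat) : H (m + m) 0 :=
  match m with
  | 0 => I 0
  | m'.+1 => castH (fun x y => H x y) (coev_eq m') erefl (cap P \o (I 1 \x ev m' \x I 1))
  end.

(* left and right transposes (rotations by pi) of f : m -> n *)
Definition transL m n (f : H m n) : H n m :=
  castH (fun x y => H x y) (addnA m n n) (addn0 m) (I m \x ev n)
    \o ((I m \x f \x I n) \o (coev m \x I n)).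

Definition transR m n (f : H m n) : H n m :=
  (ev n \x I m)
    \o ((I n \x f \x I m) \o castH (fun x y => H x y) (addn0 n) (addnA n m m) (I n \x coev m)).

Definition E : H 2 2 := cup P \o cap P.
(* e_k in P_n : cap and cup at positions k, k+1 *)
Definition e1_2 : H 2 2 := E.
Definition e2_3 : H 3 3 := I 1 \x E.
Definition e3_4 : H 4 4 := I 2 \x E.
Definition e4_5 : H 5 5 := I 3 \x E.
Definition e5_6 : H 6 6 := I 4 \x E.

(* Jones-Wenzl idempotents f^(1),...,f^(4) via the Wenzl recursion
   f^(k+1) = f^(k) (x) X - k/(k+1) (f^(k) (x) X) e_k (f^(k) (x) X) *)
Definition f1 : H 1 1 := I 1.
Definition f2 : H 2 2 :=
  (f1 \x I 1) - (1%:R / 2%:R) *: ((f1 \x I 1) \o (e1_2 \o (f1 \x I 1))).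
Definition f3 : H 3 3 :=
  (f2 \x I 1) - (2%:R / 3%:R) *: ((f2 \x I 1) \o (e2_3 \o (f2 \x I 1))).
Definition f4 : H 4 4 :=
  (f3 \x I 1) - (3%:R / 4%:R) *: ((f3 \x I 1) \o (e3_4 \o (f3 \x I 1))).

(* crossing in which the strand going from lower-right to upper-left is on top:
   crossing = i (A-smoothing) - i (B-smoothing), A-smoothing = E here *)
Definition cross_over : H 2 2 := 'i *: E - 'i *: I 2.

Definition cr9_1 : H 9 9 := cross_over \x I 7.
Definition cr9_2 : H 9 9 := I 1 \x cross_over \x I 6.
Definition cr9_3 : H 9 9 := I 2 \x cross_over \x I 5.
Definition cr9_4 : H 9 9 := I 3 \x cross_over \x I 4.
Definition cr9_5 : H 9 9 := I 4 \x cross_over \x I 3.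
Definition cr9_6 : H 9 9 := I 5 \x cross_over \x I 2.
Definition cr9_7 : H 9 9 := I 6 \x cross_over \x I 1.
Definition cr9_8 : H 9 9 := I 7 \x cross_over.

Definition capAt1 : H 4 2 := cap P \x I 2.
Definition capAt2 : H 4 2 := I 1 \x cap P \x I 1.
Definition capAt3 : H 4 2 := I 2 \x cap P.
Definition cupAt1 : H 2 4 := cup P \x I 2.
Definition cupAt2 : H 2 4 := I 1 \x cup P \x I 1.
Definition cupAt3 : H 2 4 := I 2 \x cup P.

Definition rainbow4 : H 0 8 :=
  (I 3 \x cup P \x I 3) \o ((I 2 \x cup P \x I 2) \o
    ((I 1 \x cup P \x I 1) \o cup P)).

(* S in P_4 with its 4 bottom strands bent up to the right: 0 -> 8 *)
Definition rainbowed (S : H 4 4) : H 0 8 := (S \x I 4) \o rainbow4.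

Definition relations (S : H 4 4) : Prop :=
  [/\
      pa_star P S = S,
      [/\ capAt1 \o S = 0, capAt2 \o S = 0 & capAt3 \o S = 0],
      [/\ S \o cupAt1 = 0, S \o cupAt2 = 0 & S \o cupAt3 = 0],
      (* (ii) unsidecappable: joining the leftmost (resp. rightmost) top and
         bottom points kills S *)
      ((cap P \x I 3) \o ((I 1 \x S) \o (cup P \x I 3)) = 0 /\
       (I 3 \x cap P) \o ((S \x I 1) \o (I 3 \x cup P)) = 0) &
      (
      S \o S = 6%:R *: f4 + S /\
      (* (iv) jellyfish: a strand beside the rainbowed S equals the strand
         passing around (below) the box, crossing over its 8 strands *)
      I 1 \x rainbowed S
      = cr9_1 \o (cr9_2 \o (cr9_3 \o (cr9_4 \o (cr9_5 \o (cr9_6 \o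
          (cr9_7 \o (cr9_8 \o (rainbowed S \x I 1)))))))))].

(* pivotality: left and right rotations by pi agree (planar isotopy) *)
Definition pivotal : Prop :=
  forall m n (f : H m n), transL f = transR f.

Definition P4 (S : H 4 4) : H 4 4 := (3%:R / 5%:R) *: f4 - (1%:R / 5%:R) *: S.
Definition Q4 (S : H 4 4) : H 4 4 := (2%:R / 5%:R) *: f4 + (1%:R / 5%:R) *: S.
Definition P5 (S : H 4 4) : H 5 5 :=
  (P4 S \x I 1) - (4%:R / 3%:R) *: ((P4 S \x I 1) \o (e4_5 \o (P4 S \x I 1))).
Definition P6 (S : H 4 4) : H 6 6 :=
  (P5 S \x I 1) - (3%:R / 2%:R) *: ((P5 S \x I 1) \o (e5_6 \o (P5 S \x I 1))).

End Diagrams.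

(* The projection f^(4) acts as the identity on S from both sides: every
   correction term of the Wenzl recursion for f^(4) puts a cap (resp. a cup) on
   two adjacent strands of S, which vanishes by uncappability (resp.
   uncuppability).  Hence, by S^2 = 6 f^(4) + S, the span of f^(4) and S is
   stable under composition with S, and P4 and Q4 are the eigenvectors of S
   there for the eigenvalues -2 and 3.  Finally, if Y Z = k Y then also
   (Y - c Y e Y) Z = k (Y - c Y e Y), and symmetrically on the other side;
   applied to Y = P4 (x) X and then Y = P5 (x) X this lifts (i) to P5 and P6. *)

From Pilot Require Import Defs.
From HB Require Import structures.
From mathcomp Require Import all_boot all_order all_algebra ring.
Import GRing.Theory Num.Theory.
Local Open Scope ring_scope.
Set Implicit Arguments. Unset Strict Implicit. Unset Printing Implicit Defensive.

Section Bilinearity.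
Variables (C : numClosedFieldType) (P : PA C).
Local Notation H := (PHom P).
Local Notation "f \o g" := (pa_comp P f g).
Local Notation "f \x g" := (pa_tens P f g) (at level 40, left associativity).
Local Notation I := (pa_id P).

Lemma castH_id m n (e1 : m = m) (e2 : n = n) (f : H m n) :
  castH (fun x y => H x y) e1 e2 f = f.
Proof. by rewrite (eq_irrelevance e1 erefl) (eq_irrelevance e2 erefl). Qed.

Lemma eq0_addxx (V : zmodType) (x : V) : x = x + x -> x = 0.
Proof. by move=> xx; apply: (addrI x); rewrite -xx addr0. Qed.

Lemma comp0l m n p (h : H m n) : (0 : H n p) \o h = 0.
Proof. by apply: eq0_addxx; have := compDl 1 (0 : H n p) 0 h; rewrite !scale1r addr0. Qed.

Lemma comp0r m n p (f : H n p) : f \o (0 : H m n) = 0.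
Proof. by apply: eq0_addxx; have := compDr 1 f (0 : H m n) 0; rewrite !scale1r addr0. Qed.

Lemma compZl m n p a (f : H n p) (h : H m n) : (a *: f) \o h = a *: (f \o h).
Proof. by have := compDl a f 0 h; rewrite !addr0 comp0l addr0. Qed.

Lemma compZr m n p a (f : H n p) (h : H m n) : f \o (a *: h) = a *: (f \o h).
Proof. by have := compDr a f h 0; rewrite !addr0 comp0r addr0. Qed.

Lemma compBl m n p (f g : H n p) (h : H m n) : (f - g) \o h = (f \o h) - (g \o h).
Proof. by rewrite -scaleN1r -[f]scale1r compDl !compZl !scale1r scaleN1r. Qed.

Lemma compBr m n p (f : H n p) (g h : H m n) : f \o (g - h) = (f \o g) - (f \o h).
Proof. by rewrite -scaleN1r -[g]scale1r compDr !compZr !scale1r scaleN1r. Qed.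

Lemma tens0l a b c d (h : H c d) : (0 : H a b) \x h = 0.
Proof. by apply: eq0_addxx; have := tensDl 1 (0 : H a b) 0 h; rewrite !scale1r addr0. Qed.

Lemma tensZl a b c d k (f : H a b) (h : H c d) : (k *: f) \x h = k *: (f \x h).
Proof. by have := tensDl k f 0 h; rewrite !addr0 tens0l addr0. Qed.

Lemma tensBl a b c d (f g : H a b) (h : H c d) : (f - g) \x h = (f \x h) - (g \x h).
Proof. by rewrite -scaleN1r -[f]scale1r tensDl !tensZl !scale1r scaleN1r. Qed.

Lemma tensI_comp a b c k (f : H b c) (g : H a b) :
  (f \o g) \x I k = (f \x I k) \o (g \x I k).
Proof. by rewrite tens_interchange comp1f. Qed.

Lemma Itens_comp a b c k (f : H b c) (g : H a b) :
  I k \x (f \o g) = (I k \x f) \o (I k \x g).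
Proof. by rewrite tens_interchange comp1f. Qed.

Lemma tensI_add a b m k (f : H a b) :
  f \x I (m + k) = castH (fun x y => H x y) (esym (addnA a m k)) (esym (addnA b m k))
                     (f \x I m \x I k).
Proof. by rewrite -tensA tens_id. Qed.

End Bilinearity.

Section WenzlExtension.
Variables (C : numClosedFieldType) (P : PA C).
Local Notation H := (PHom P).
Local Notation "f \o g" := (pa_comp P f g).
Local Notation "f \x g" := (pa_tens P f g) (at level 40, left associativity).
Local Notation I := (pa_id P).

Definition wenzl n (c : C) (e Y : H n n) : H n n := Y - c *: (Y \o (e \o Y)).

Lemma wenzl_tensI n k c (e Y : H n n) :
  wenzl c e Y \x I k = wenzl c (e \x I k) (Y \x I k).
Proof. by rewrite /wenzl tensBl tensZl !tensI_comp. Qed.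

Lemma wenzl_absorbl n c (e Y : H n n) m (S : H m n) :
  Y \o S = S -> e \o S = 0 -> wenzl c e Y \o S = S.
Proof.
by move=> YS eS; rewrite compBl compZl -!Defs.compA YS eS comp0r scaler0 subr0.
Qed.

Lemma wenzl_absorbr n c (e Y : H n n) m (S : H n m) :
  S \o Y = S -> S \o e = 0 -> S \o wenzl c e Y = S.
Proof.
by move=> SY Se; rewrite compBr compZr !Defs.compA SY Se !comp0l scaler0 subr0.
Qed.

Lemma wenzl_eigenl n c (e Y Z : H n n) k :
  Y \o Z = k *: Y -> wenzl c e Y \o Z = k *: wenzl c e Y.
Proof.
move=> YZ; rewrite compBl compZl -!Defs.compA YZ !compZr.
by rewrite scalerBr !scalerA [c * k]mulrC.
Qed.

Lemma wenzl_eigenr n c (e Y Z : H n n) k :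
  Z \o Y = k *: Y -> Z \o wenzl c e Y = k *: wenzl c e Y.
Proof.
move=> ZY; rewrite compBr compZr Defs.compA ZY compZl.
by rewrite scalerBr !scalerA [c * k]mulrC.
Qed.

Lemma tensI_comp_scale a b c m (A : H b c) (B : H a b) (D : H a c) k :
  A \o B = k *: D -> (A \x I m) \o (B \x I m) = k *: (D \x I m).
Proof. by move=> AB; rewrite -tensI_comp AB tensZl. Qed.

End WenzlExtension.

Section QuadraticRelation.
Variables (C : numClosedFieldType) (P : PA C) (n : nat) (f S : PHom P n n) (c : C).
Local Notation "x \o y" := (pa_comp P x y).
Hypotheses (fS : f \o S = S) (Sf : S \o f = S) (SS : S \o S = c *: f + S).

Lemma span_eigenl a b k :
  b * c = k * a -> a + b = k * b -> (a *: f + b *: S) \o S = k *: (a *: f + b *: S).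
Proof.
move=> ha hb; rewrite compDl compZl fS SS scalerDr scalerA addrCA -scalerDl.
by rewrite scalerDr !scalerA ha hb.
Qed.

Lemma span_eigenr a b k :
  b * c = k * a -> a + b = k * b -> S \o (a *: f + b *: S) = k *: (a *: f + b *: S).
Proof.
move=> ha hb; rewrite compDr compZr Sf SS scalerDr scalerA addrCA -scalerDl.
by rewrite scalerDr !scalerA ha hb.
Qed.

End QuadraticRelation.

Section JonesWenzlAbsorption.
Variables (C : numClosedFieldType) (P : PA C).
Local Notation H := (PHom P).
Local Notation "f \o g" := (pa_comp P f g).
Local Notation "f \x g" := (pa_tens P f g) (at level 40, left associativity).
Local Notation I := (pa_id P).

Lemma e1_2_tensI : e1_2 P \x I 2 = cupAt1 P \o capAt1 P.
Proof. by rewrite /e1_2 /E tensI_comp. Qed.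

Lemma e2_3_tensI : e2_3 P \x I 1 = cupAt2 P \o capAt2 P.
Proof. by rewrite /e2_3 /E Itens_comp tensI_comp. Qed.

Lemma e3_4E : e3_4 P = cupAt3 P \o capAt3 P.
Proof. by rewrite /e3_4 /E Itens_comp. Qed.

Variable S : H 4 4.

Lemma f4_absorbl :
  [/\ capAt1 P \o S = 0, capAt2 P \o S = 0 & capAt3 P \o S = 0] -> f4 P \o S = S.
Proof.
case=> cap1S cap2S cap3S.
have f2S : (f2 P \x I 2) \o S = S.
  rewrite [f2 P]/f2 -/(wenzl _ _ _) wenzl_tensI; apply: wenzl_absorbl.
    by rewrite /f1 !tens_id comp1f.
  by rewrite e1_2_tensI -Defs.compA cap1S comp0r.
have f3S : (f3 P \x I 1) \o S = S.
  rewrite [f3 P]/f3 -/(wenzl _ _ _) wenzl_tensI; apply: wenzl_absorbl.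
    by move: f2S; rewrite (tensI_add 1 1) castH_id.
  by rewrite e2_3_tensI -Defs.compA cap2S comp0r.
rewrite [f4 P]/f4 -/(wenzl _ _ _); apply: wenzl_absorbl => //.
by rewrite e3_4E -Defs.compA cap3S comp0r.
Qed.

Lemma f4_absorbr :
  [/\ S \o cupAt1 P = 0, S \o cupAt2 P = 0 & S \o cupAt3 P = 0] -> S \o f4 P = S.
Proof.
case=> Scup1 Scup2 Scup3.
have Sf2 : S \o (f2 P \x I 2) = S.
  rewrite [f2 P]/f2 -/(wenzl _ _ _) wenzl_tensI; apply: wenzl_absorbr.
    by rewrite /f1 !tens_id compf1.
  by rewrite e1_2_tensI Defs.compA Scup1 comp0l.
have Sf3 : S \o (f3 P \x I 1) = S.
  rewrite [f3 P]/f3 -/(wenzl _ _ _) wenzl_tensI; apply: wenzl_absorbr.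
    by move: Sf2; rewrite (tensI_add 1 1) castH_id.
  by rewrite e2_3_tensI Defs.compA Scup2 comp0l.
rewrite [f4 P]/f4 -/(wenzl _ _ _); apply: wenzl_absorbr => //.
by rewrite e3_4E Defs.compA Scup3 comp0l.
Qed.

End JonesWenzlAbsorption.

Theorem lemma4p75 (C : numClosedFieldType) (P : PA C) (S : PHom P 4 4) :
  pivotal P -> relations S ->
  [/\ (* (i) *)
      pa_comp P (P4 S) S = - 2%:R *: P4 S /\ pa_comp P S (P4 S) = - 2%:R *: P4 S,
      (* (ii) *)
      pa_comp P (Q4 S) S = 3%:R *: Q4 S /\ pa_comp P S (Q4 S) = 3%:R *: Q4 S,
      (* (iii) *)
      pa_comp P (P5 S) (pa_tens P S (pa_id P 1)) = - 2%:R *: P5 S /\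
      pa_comp P (pa_tens P S (pa_id P 1)) (P5 S) = - 2%:R *: P5 S &
      (* (iv) *)
      pa_comp P (P6 S) (pa_tens P S (pa_id P 2)) = - 2%:R *: P6 S /\
      pa_comp P (pa_tens P S (pa_id P 2)) (P6 S) = - 2%:R *: P6 S].
Proof.
move=> _ [_ /f4_absorbl f4S /f4_absorbr Sf4 _ [SS _]].
have P4E : P4 S = (3%:R / 5%:R) *: f4 P + (- (1%:R / 5%:R)) *: S by rewrite scaleNr.
have P4S : pa_comp P (P4 S) S = - 2%:R *: P4 S.
  by rewrite P4E; apply: (span_eigenl f4S SS); field.
have SP4 : pa_comp P S (P4 S) = - 2%:R *: P4 S.
  by rewrite P4E; apply: (span_eigenr Sf4 SS); field.
have P5S : pa_comp P (P5 S) (pa_tens P S (pa_id P 1)) = - 2%:R *: P5 S.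
  exact: wenzl_eigenl (tensI_comp_scale 1 P4S).
have SP5 : pa_comp P (pa_tens P S (pa_id P 1)) (P5 S) = - 2%:R *: P5 S.
  exact: wenzl_eigenr (tensI_comp_scale 1 SP4).
rewrite (tensI_add 1 1) castH_id; split; split => //.
- by apply: (span_eigenl f4S SS); field.
- by apply: (span_eigenr Sf4 SS); field.
- exact: wenzl_eigenl (tensI_comp_scale 1 P5S).
- exact: wenzl_eigenr (tensI_comp_scale 1 SP5).
Qed.
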